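(* Let $P$ be a finite graded poset with a unique minimum $\hat{0}$ and a unique maximum $\hat{1}$, endowed with its rank function $\operatorname{rk}$, and let $H=\operatorname{rk}(\hat{1})$. Let $X_P(y)=\sum_{p\in P}\mu(\hat{0},p)\,y^{H-\operatorname{rk}(p)}$ be the characteristic polynomial of $P$, where $\mu$ is the Möbius function of $P$. Then no coefficient of the $q$-Zeta polynomial $\mathsf{Z}_{P,\operatorname{rk}}(x)\in\mathbb{Q}(q)[x]$ has a pole at $q=0$, and the polynomial $\mathsf{Z}_{P,\operatorname{rk}}|_{q=0}(x)$ obtained by setting $q=0$ in its coefficients satisfies $$\mathsf{Z}_{P,\operatorname{rk}}|_{q=0}(1-y)=y^{H}X_P(1/y).$$
   Context: $q$ is an indeterminate; for $n\in\mathbb{Z}$, $[n]_q=(q^n-1)/(q-1)$, and $[n]!_q=[1]_q[2]_q\cdots[n]_q$ for $n\ge 0$. For a finite poset $P$, a height function is a map $h:P\to\mathbb{N}$ with $h(x)<h(y)$ whenever $y$ covers $x$. A poset is graded if it has a height function increasing by exactly $1$ along every cover relation; $\operatorname{rk}$ denotes such a height function with minimum value $0$ on each connected component. For $k\ge1$, $\operatorname{Ch}_k(P)$ is the set of strict chains $c_1<\cdots<c_k$ in $P$. For a tuple $a=(a_1,\dots,a_k)$ of distinct nonnegative integers, $\mathsf{E}_a\in\mathbb{Q}(q)[x]$ is the unique polynomial with $\mathsf{E}_a([n]_q)=\sum_{m\in\mathbb{N}^k,\ m_1+\cdots+m_k=n}q^{a_1m_1+\cdots+a_km_k}$ for all $n\ge0$.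 The $q$-Zeta polynomial of $(P,h)$ is $$\mathsf{Z}_{P,h}(x)=\sum_{k\ge1}\sum_{c\in\operatorname{Ch}_k(P)}q^{h(c_1)+\cdots+h(c_k)}\,\mathsf{E}_{(h(c_1),\dots,h(c_k))}\!\left(\frac{x-[k+1]_q}{q^{k+1}}\right)\in\mathbb{Q}(q)[x];$$ it is the unique polynomial such that $\mathsf{Z}_{P,h}([n]_q)=\sum_{e_1\le e_2\le\cdots\le e_{n-1}\text{ in }P}q^{h(e_1)+\cdots+h(e_{n-1})}$ for all integers $n\ge2$. *)

From HB Require Import structures.
From mathcomp Require Import all_boot all_order all_algebra.
From mathcomp Require Import fraction.
Set Implicit Arguments. Unset Strict Implicit. Unset Printing Implicit Defensive.
Import Order.TTheory GRing.Theory Num.Theory.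
Local Open Scope ring_scope.

Definition covers d (P : finPOrderType d) (x y : P) : bool :=
  (x < y)%O && [forall z : P, ~~ ((x < z)%O && (z < y)%O)].

Definition is_rank_function d (P : finTBPOrderType d) (rk : P -> nat) : Prop :=
  rk (\bot)%O = 0%N /\ (forall x y : P, covers x y -> rk y = (rk x).+1).

Definition graded d (P : finTBPOrderType d) : Prop :=
  exists rk : P -> nat, is_rank_function rk.

(* The fuel #|P| is sufficient since every strict chain in P has
   at most #|P| elements. *)
Fixpoint mobius_fuel d (P : finPOrderType d) (n : nat) (x y : P) : int :=
  match n with
  | 0 => 0
  | n'.+1 =>
      if x == y then 1
      else if (x < y)%O then
        - \sum_(z : P | (x <= z)%O && (z < y)%O) mobius_fuel n' x z
      else 0
  end.

Definition mobius d (P : finPOrderType d) (x y : P) : int :=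
  mobius_fuel #|P| x y.

Definition charpoly_poset d (P : finTBPOrderType d) (rk : P -> nat)
  : {poly rat} :=
  \sum_(p : P) ((mobius (\bot)%O p)%:~R *: 'X^(rk (\top)%O - rk p)).

Definition Qq := {fraction {poly rat}}.

Definition tofracQ (p : {poly rat}) : Qq := @FracField.tofrac _ p.

Definition qvar : Qq := tofracQ 'X.

Definition qint (n : nat) : Qq := (qvar ^+ n - 1) / (qvar - 1).

Definition multichain d (P : porderType d) k (e : {ffun 'I_k -> P}) : bool :=
  [forall i : 'I_k, forall j : 'I_k, (i <= j)%N ==> (e i <= e j)%O].

Definition is_qZeta d (P : finPOrderType d) (h : P -> nat) (Z : {poly Qq})
  : Prop :=
  forall n : nat, (2 <= n)%N ->
    Z.[qint n] =
    \sum_(e : {ffun 'I_n.-1 -> P} | multichain e)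
       qvar ^+ (\sum_(i < n.-1) h (e i)).

Definition value_at_q0 (c : Qq) (v : rat) : Prop :=
  exists a b : {poly rat},
    b.[0] != 0 /\ c = tofracQ a / tofracQ b /\ v = a.[0] / b.[0].

Definition no_pole_at_q0 (c : Qq) : Prop := exists v : rat, value_at_q0 c v.

From HB Require Import structures.
From mathcomp Require Import all_boot all_order all_algebra.
From mathcomp Require Import fraction ring.
Import Order.TTheory GRing.Theory Num.Theory.
Set Implicit Arguments.
Unset Strict Implicit.
Local Open Scope ring_scope.

(* Let W_x(m) be the sum of q^(rk e_1 + ... + rk e_m) over the multichains
   e_1 <= ... <= e_m <= x. Splitting off e_m = y gives
   W_x(m+1) = sum_(y <= x) q^(rk y) W_y(m) and W_x(0) = 1.  By induction along
   < we build polynomials E_x(t) = sum_j G x j * t^j of degree rk x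
   ([lower_zeta], with coefficients [lower_zeta_coef]) such that
   E_x(q t) = sum_(y <= x) q^(rk y) E_y(t) and E_x(1) = [x == bot]:
   comparing coefficients of t^j gives (q^j - q^(rk x)) G x j =
   sum_(y < x) q^(rk y) G y j, which determines G x j for j <> rk x, and
   E_x(1) then fixes G x (rk x).  It follows that E_x(q^(m+1)) = W_x(m), so,
   as 1 + (q - 1)[n]_q = q^n, the q-Zeta polynomial is E_top(1 + (q - 1) X).
   The only denominators are 1 - q^(rk x - j), which do not vanish at q = 0,
   and at q = 0 the recursion for G becomes Moebius inversion: G x j tends to
   the sum of mu(bot, p) over the p <= x of rank j.  Hence
   Z|_(q=0)(1 - y) = sum_p mu(bot, p) y^(rk p) = y^H X_P(1/y). *)

Lemma tofracQ_neq0 (b : {poly rat}) : b.[0] != 0 -> tofracQ b != 0.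
Proof. by move=> b0; rewrite tofrac_eq0; apply: contraNneq b0 => ->; rewrite horner0. Qed.

Lemma value_at_q0_poly (a : {poly rat}) : value_at_q0 (tofracQ a) a.[0].
Proof. by exists a, 1; rewrite hornerC oner_neq0 /tofracQ tofrac1 !divr1. Qed.

Lemma value_at_q0_nat (n : nat) : value_at_q0 n%:R n%:R.
Proof. by have := value_at_q0_poly n%:R; rewrite /tofracQ rmorph_nat hornerMn hornerC. Qed.

Lemma value_at_q0D {c v c' v'} :
  value_at_q0 c v -> value_at_q0 c' v' -> value_at_q0 (c + c') (v + v').
Proof.
move=> [a [b [b0 [-> ->]]]] [a' [b' [b0' [-> ->]]]].
exists (a * b' + a' * b), (b * b'); rewrite hornerM mulf_neq0 //.
by rewrite !addf_div ?tofracQ_neq0 // hornerD !hornerM /tofracQ rmorphD !rmorphM.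
Qed.

Lemma value_at_q0N {c v} : value_at_q0 c v -> value_at_q0 (- c) (- v).
Proof.
by move=> [a [b [b0 [-> ->]]]]; exists (- a), b; rewrite hornerN /tofracQ rmorphN !mulNr.
Qed.

Lemma value_at_q0M {c v c' v'} :
  value_at_q0 c v -> value_at_q0 c' v' -> value_at_q0 (c * c') (v * v').
Proof.
move=> [a [b [b0 [-> ->]]]] [a' [b' [b0' [-> ->]]]].
exists (a * a'), (b * b'); rewrite !hornerM mulf_neq0 //.
by rewrite !mulf_div /tofracQ !rmorphM.
Qed.

Lemma value_at_q0V {c v} : value_at_q0 c v -> v != 0 -> value_at_q0 c^-1 v^-1.
Proof.
move=> [a [b [b0 [-> ->]]]] v0; exists b, a; rewrite !invf_div.
by split=> //; apply: contraNneq v0 => ->; rewrite mul0r.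
Qed.

Lemma value_at_q0_sum (I : Type) (r : seq I) (Pr : pred I) F G :
  (forall i, Pr i -> value_at_q0 (F i) (G i)) ->
  value_at_q0 (\sum_(i <- r | Pr i) F i) (\sum_(i <- r | Pr i) G i).
Proof. exact: (big_ind2 _ (value_at_q0_nat 0) (@value_at_q0D)). Qed.

Lemma value_at_q0_qvar : value_at_q0 qvar 0.
Proof. by have := value_at_q0_poly 'X; rewrite hornerX. Qed.

Lemma value_at_q0_qvarX k : value_at_q0 (qvar ^+ k) (k == 0)%:R.
Proof. by have := value_at_q0_poly 'X^k; rewrite /tofracQ tofracXn hornerXn expr0n. Qed.

Lemma value_at_q0_inv_1subqX k :
  (0 < k)%N -> value_at_q0 (1 - qvar ^+ k)^-1 1.
Proof.
move=> k_gt0; rewrite -[X in value_at_q0 _ X]invr1; apply: value_at_q0V (oner_neq0 _).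
have := value_at_q0D (value_at_q0_nat 1) (value_at_q0N (value_at_q0_qvarX k)).
by rewrite eqn0Ngt k_gt0 mulr0n subr0.
Qed.

Definition poly_value_at_q0 (p : {poly Qq}) (p0 : {poly rat}) : Prop :=
  forall i, value_at_q0 p`_i p0`_i.

Lemma poly_value_at_q0_1 : poly_value_at_q0 1 1.
Proof. by move=> i; rewrite !coef1; apply: value_at_q0_nat. Qed.

Lemma poly_value_at_q0_X : poly_value_at_q0 'X 'X.
Proof. by move=> i; rewrite !coefX; apply: value_at_q0_nat. Qed.

Lemma poly_value_at_q0Z c v p p0 :
  value_at_q0 c v -> poly_value_at_q0 p p0 -> poly_value_at_q0 (c *: p) (v *: p0).
Proof. by move=> cv pp0 i; rewrite !coefZ; apply: value_at_q0M. Qed.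

Lemma poly_value_at_q0D p p0 p' p0' :
  poly_value_at_q0 p p0 -> poly_value_at_q0 p' p0' ->
  poly_value_at_q0 (p + p') (p0 + p0').
Proof. by move=> pp0 pp0' i; rewrite !coefD; apply: value_at_q0D. Qed.

Lemma poly_value_at_q0M p p0 p' p0' :
  poly_value_at_q0 p p0 -> poly_value_at_q0 p' p0' ->
  poly_value_at_q0 (p * p') (p0 * p0').
Proof.
by move=> pp0 pp0' i; rewrite !coefM; apply: value_at_q0_sum => k _; apply: value_at_q0M.
Qed.

Lemma poly_value_at_q0X n p p0 :
  poly_value_at_q0 p p0 -> poly_value_at_q0 (p ^+ n) (p0 ^+ n).
Proof.
move=> pp0; elim: n => [|n IHn]; first by rewrite !expr0; apply: poly_value_at_q0_1.
by rewrite !exprS; apply: poly_value_at_q0M.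
Qed.

Lemma poly_value_at_q0_sum (I : Type) (r : seq I) F G :
  (forall i, poly_value_at_q0 (F i) (G i)) ->
  poly_value_at_q0 (\sum_(i <- r) F i) (\sum_(i <- r) G i).
Proof.
move=> FG; apply: (big_ind2 _ _ (@poly_value_at_q0D)) => // i.
by rewrite !coef0; apply: (value_at_q0_nat 0).
Qed.

Lemma qvarX_inj : injective (fun k => qvar ^+ k).
Proof.
move=> m n /eqP; rewrite /qvar /tofracQ -!tofracXn tofrac_eq => /eqP.
by move/(congr1 (size : {poly rat} -> nat)); rewrite !size_polyXn => -[].
Qed.

Lemma qvarX_eq1 k : (qvar ^+ k == 1) = (k == 0%N).
Proof. by rewrite -(expr0 qvar) (inj_eq qvarX_inj). Qed.

Lemma qvar_sub1_neq0 : qvar - 1 != 0.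
Proof. by rewrite subr_eq0 -[qvar]expr1 qvarX_eq1. Qed.

Lemma qintK n : 1 + (qvar - 1) * qint n = qvar ^+ n.
Proof. by rewrite /qint mulrC divfK ?qvar_sub1_neq0 // addrC subrK. Qed.

Lemma qint_inj : injective qint.
Proof.
by move=> m n /(congr1 (fun t => 1 + (qvar - 1) * t)); rewrite !qintK => /qvarX_inj.
Qed.

Lemma is_qZeta_unique d (P : finPOrderType d) (h : P -> nat) (Z Z' : {poly Qq}) :
  is_qZeta h Z -> is_qZeta h Z' -> Z = Z'.
Proof.
move=> hZ hZ'; apply/eqP; rewrite -subr_eq0; apply: contraT => nz_ZZ'.
pose roots := [seq qint i.+2 | i <- iota 0 (size (Z - Z'))].
have roots_uniq : uniq roots.
  by rewrite map_inj_uniq ?iota_uniq // => i j /qint_inj [].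
have all_roots : all (root (Z - Z')) roots.
  by apply/allP => _ /mapP[i _ ->]; rewrite /root !hornerE hZ // hZ' // subrr.
by have := max_poly_roots nz_ZZ' all_roots roots_uniq; rewrite size_map size_iota ltnn.
Qed.

Section FinitePoset.
Variables (d : Order.disp_t) (P : finPOrderType d).

Definition down_card (x : P) : nat := #|[set y | (y <= x)%O]|.

Lemma down_card_lt {x y : P} : (x < y)%O -> (down_card x < down_card y)%N.
Proof.
move=> lt_xy; apply/proper_card/properP; split.
  by apply/subsetP => z; rewrite !inE => /le_trans; apply; apply: ltW.
by exists y; rewrite !inE ?lexx ?(lt_geF lt_xy).
Qed.

Lemma exists_cover (x y : P) : (x < y)%O -> exists2 w, (x <= w)%O & covers w y.
Proof.
move=> lt_xy; have x_in : (x <= x < y)%O by rewrite lexx.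
have [w /andP[le_xw lt_wy] w_max] :=
  @arg_maxnP _ x (fun w => (x <= w < y)%O) down_card x_in.
exists w => //; rewrite /covers lt_wy; apply/forallP => z; apply/negP => /andP[lt_wz lt_zy].
have /= := w_max z; rewrite (le_trans le_xw (ltW lt_wz)) lt_zy leqNgt.
by rewrite (down_card_lt lt_wz) => /(_ isT).
Qed.

Lemma lt_ind (Q : P -> Prop) :
  (forall x, (forall y, (y < x)%O -> Q y) -> Q x) -> forall x, Q x.
Proof.
move=> IH x; have [n] := ubnP (down_card x); elim: n x => // n IHn x lt_xn.
apply: IH => y lt_yx; apply: IHn.
by apply: leq_trans (down_card_lt lt_yx) _; rewrite -ltnS.
Qed.

Section Recursion.
Variables (I B : Type) (F : (P -> I -> B) -> P -> I -> B) (g : nat -> P -> I -> B).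
Hypothesis F_local : forall f f' x,
  (forall y, (y < x)%O -> f y =1 f' y) -> F f x =1 F f' x.
Hypothesis gS : forall n x, g n.+1 x =1 F (g n) x.

Lemma lt_rec_stable x n : (down_card x <= n)%N -> g n x =1 g n.+1 x.
Proof.
elim/lt_ind: x n => x IHx [|n] le_xn i.
  by move: le_xn; rewrite leqn0 /down_card (cardD1 x) inE lexx.
rewrite !gS; apply: F_local => y lt_yx; apply: IHx => //.
by rewrite -ltnS (leq_trans (down_card_lt lt_yx)).
Qed.

Lemma lt_rec_fixpoint x : g #|P| x =1 F (g #|P|) x.
Proof. by move=> i; rewrite lt_rec_stable ?max_card ?gS. Qed.

End Recursion.

Lemma mobiusE (x y : P) :
  mobius x y = if x == y then 1 else if (x < y)%O
    then - \sum_(z | (x <= z)%O && (z < y)%O) mobius x z else 0.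
Proof.
pose F f y (x : P) := if x == y then 1 else if (x < y)%O
  then - \sum_(z | (x <= z)%O && (z < y)%O) f z x else 0 : int.
apply: (@lt_rec_fixpoint _ _ F (fun n y x => mobius_fuel n x y)) => // f f' {}y ff' z.
rewrite /F; case: eqP => //; case: ifP => // _ _; congr (- _).
by apply: eq_bigr => w /andP[_ /ff']; apply.
Qed.

Lemma mobius_sum (x y : P) : (x <= y)%O ->
  \sum_(z | (x <= z)%O && (z <= y)%O) mobius x z = (x == y)%:R.
Proof.
rewrite le_eqVlt => /predU1P[-> | lt_xy].
  rewrite (big_pred1 y) ?mobiusE ?eqxx // => z.
  by rewrite -eq_le eq_sym.
rewrite (bigD1 y) ?lexx ?ltW //= mobiusE (lt_eqF lt_xy) lt_xy addrC.
rewrite (eq_bigl (fun z => (x <= z < y)%O)) ?subrr // => z.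
by rewrite lt_neqAle -andbA [(z <= y)%O && _]andbC.
Qed.

End FinitePoset.

Section FfunRcons.
Variable T : Type.

Definition ffun_rcons m (e : {ffun 'I_m -> T}) (y : T) : {ffun 'I_m.+1 -> T} :=
  [ffun i => if unlift ord_max i is Some j then e j else y].

Lemma ffun_rcons_lift m (e : {ffun 'I_m -> T}) y i :
  ffun_rcons e y (lift ord_max i) = e i.
Proof. by rewrite ffunE liftK. Qed.

Lemma ffun_rcons_max m (e : {ffun 'I_m -> T}) y : ffun_rcons e y ord_max = y.
Proof. by rewrite ffunE unlift_none. Qed.

Lemma ffun_rcons_bij m :
  bijective (fun p : T * {ffun 'I_m -> T} => ffun_rcons p.2 p.1).
Proof.
exists (fun e : {ffun 'I_m.+1 -> T} => (e ord_max, [ffun i => e (lift ord_max i)])).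
  case=> y e /=; rewrite ffun_rcons_max; congr (_, _).
  by apply/ffunP => i; rewrite ffunE ffun_rcons_lift.
move=> e; apply/ffunP => i /=.
by case: (unliftP ord_max i) => [j|] ->; rewrite ?ffun_rcons_lift ?ffun_rcons_max ?ffunE.
Qed.

Lemma forall_ffun_rcons m (e : {ffun 'I_m -> T}) y (Q : pred T) :
  [forall i, Q (ffun_rcons e y i)] = [forall i, Q (e i)] && Q y.
Proof.
apply/forallP/andP => [Qey | [/forallP Qe Qy] i].
  split; last by rewrite -(ffun_rcons_max e y).
  by apply/forallP => i; rewrite -(ffun_rcons_lift e y).
by case: (unliftP ord_max i) => [j|] ->; rewrite ?ffun_rcons_lift ?ffun_rcons_max.
Qed.

End FfunRcons.

Section Multichains.
Variables (d : Order.disp_t) (T : porderType d).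

Lemma multichainP m (e : {ffun 'I_m -> T}) :
  reflect (forall i j : 'I_m, (i <= j)%N -> (e i <= e j)%O) (multichain e).
Proof.
apply: (iffP forallP) => [mc i j | mc i]; first exact/implyP/(forallP (mc i)).
by apply/forallP => j; apply/implyP/mc.
Qed.

Lemma multichain_rcons m (e : {ffun 'I_m -> T}) y :
  multichain (ffun_rcons e y) = multichain e && [forall i, (e i <= y)%O].
Proof.
apply/multichainP/andP => [mc | [/multichainP mc /forallP le_ey] i j].
  split; last first.
    apply/forallP => i; have := mc (lift ord_max i) ord_max.
    by rewrite ffun_rcons_lift ffun_rcons_max lift_max; apply; apply: ltnW.
  apply/multichainP => i j le_ij; rewrite -!(ffun_rcons_lift e y).
  by apply: mc; rewrite !lift_max.
case: (unliftP ord_max j) => [j' ->|->]; last first.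
  by case: (unliftP ord_max i) => [i' ->|->] _; rewrite ?ffun_rcons_lift ffun_rcons_max.
case: (unliftP ord_max i) => [i' ->|->]; last by rewrite lift_max leqNgt ltn_ord.
by rewrite !ffun_rcons_lift !lift_max; apply: mc.
Qed.

End Multichains.

Lemma div_subr1_fixpoint (F : fieldType) (c s : F) :
  1 - c != 0 -> s / (1 - c) = c * (s / (1 - c)) + s.
Proof. by move=> ?; field. Qed.

Section GradedPoset.
Variables (d : Order.disp_t) (P : finTBPOrderType d) (rk : P -> nat).
Hypothesis rk_rank : is_rank_function rk.

Lemma rk_bot : rk \bot%O = 0%N.
Proof. by case: rk_rank. Qed.

Lemma rk_cover (x y : P) : covers x y -> rk y = (rk x).+1.
Proof. by case: rk_rank => _; apply. Qed.

Lemma rk_lt (x y : P) : (x < y)%O -> (rk x < rk y)%N.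
Proof.
elim/lt_ind: y x => y IHy x lt_xy.
have [w le_xw cov_wy] := exists_cover lt_xy.
rewrite (rk_cover cov_wy) ltnS; case: (eqVneq x w) => [-> // | ne_xw].
by apply/ltnW/IHy; [case/andP: cov_wy | rewrite lt_neqAle ne_xw].
Qed.

Lemma rk_le (x y : P) : (x <= y)%O -> (rk x <= rk y)%N.
Proof. by rewrite le_eqVlt => /predU1P[-> // | /rk_lt/ltnW]. Qed.

Lemma rk_le_top (x : P) : (rk x <= rk \top%O)%N.
Proof. exact/rk_le/lex1. Qed.

Definition mobius_rank_poly (x : P) : {poly rat} :=
  \sum_(p | (p <= x)%O) (mobius \bot%O p)%:~R *: 'X^(rk p).

Local Notation V := mobius_rank_poly.

Lemma coef_mobius_rank_poly x j : (V x)`_j =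
  \sum_(p | (p <= x)%O) (rk p == j)%:R * (mobius \bot%O p)%:~R.
Proof. by rewrite coef_sum; apply: eq_bigr => p _; rewrite coefZ coefXn mulrC eq_sym. Qed.

Lemma coef_mobius_rank_poly_gt x j : (rk x < j)%N -> (V x)`_j = 0.
Proof.
move=> lt_xj; rewrite coef_mobius_rank_poly big1 // => p le_px.
by rewrite ltn_eqF ?mul0r // (leq_ltn_trans (rk_le le_px)).
Qed.

Lemma size_mobius_rank_poly x : (size (V x) <= (rk x).+1)%N.
Proof. exact/leq_sizeP/coef_mobius_rank_poly_gt. Qed.

Lemma coef_mobius_rank_poly_rk x : (V x)`_(rk x) = (mobius \bot%O x)%:~R.
Proof.
rewrite coef_mobius_rank_poly (bigD1 x) //= eqxx mul1r big1 ?addr0 // => p.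
by case/andP=> le_px ne_px; rewrite ltn_eqF ?mul0r // rk_lt // lt_neqAle ne_px.
Qed.

Lemma coef_mobius_rank_poly_below x i : (i < rk x)%N ->
  \sum_(y | (y < x)%O) ((rk y - i)%N == 0%N)%:R * (V y)`_i
  = (V x)`_i.
Proof.
move=> lt_ix; rewrite coef_mobius_rank_poly [RHS](bigD1 x) //= (gtn_eqF lt_ix) mul0r add0r.
rewrite [RHS](eq_bigl (fun y => (y < x)%O)) => [|y]; last by rewrite lt_neqAle andbC.
apply: eq_bigr => y _; rewrite subn_eq0; case: ltngtP => [lt_yi | lt_iy | <-].
- by rewrite coef_mobius_rank_poly_gt // mulr0n !mul0r mulr0.
- by rewrite !mulr0n !mul0r.
- by rewrite coef_mobius_rank_poly_rk.
Qed.

Lemma mobius_rank_poly1 x : (V x).[1] = (x == \bot%O)%:R.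
Proof.
rewrite horner_sum (eq_bigr (fun p => (mobius \bot%O p)%:~R)) => [|p _]; last first.
  by rewrite hornerZ hornerXn expr1n mulr1.
rewrite -rmorph_sum (eq_bigl (fun p => (\bot <= p <= x)%O)) => [|p]; last by rewrite le0x.
by rewrite mobius_sum ?le0x // eq_sym rmorph_nat.
Qed.

Lemma sum_coef_mobius_rank_poly x :
  \sum_(i < (rk x).+1) (V x)`_i = (x == \bot%O)%:R.
Proof.
rewrite -mobius_rank_poly1 (horner_coef_wide _ (size_mobius_rank_poly x)).
by apply: eq_bigr => i _; rewrite expr1n mulr1.
Qed.

Lemma mobius_rank_poly_top (y : rat) : y != 0 ->
  (V \top%O).[y] = y ^+ rk \top%O * (charpoly_poset rk).[y^-1].
Proof.
move=> y_neq0; rewrite /charpoly_poset !horner_sum mulr_sumr.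
rewrite (eq_bigl xpredT) => [|p]; last exact: lex1.
apply: eq_bigr => p _; rewrite !hornerZ !hornerXn mulrCA; congr (_ * _).
by rewrite -(subnKC (rk_le_top p)) exprD exprVn addKn mulfK ?expf_neq0.
Qed.

Definition scaled_below_sum (f : P -> nat -> Qq) (x : P) (i : nat) : Qq :=
  (\sum_(y | (y < x)%O) qvar ^+ (rk y - i) * f y i) / (1 - qvar ^+ (rk x - i)).

Definition lower_zeta_coef_step (f : P -> nat -> Qq) (x : P) (j : nat) : Qq :=
  if (j < rk x)%N then scaled_below_sum f x j
  else if j == rk x then (x == \bot%O)%:R - \sum_(i < rk x) scaled_below_sum f x i
  else 0.

Fixpoint lower_zeta_coef_fuel (n : nat) : P -> nat -> Qq :=
  if n is n'.+1 then lower_zeta_coef_step (lower_zeta_coef_fuel n') else fun _ _ => 0.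

Definition lower_zeta_coef : P -> nat -> Qq := lower_zeta_coef_fuel #|P|.

Local Notation G := lower_zeta_coef.

Lemma lower_zeta_coefE x j : G x j = lower_zeta_coef_step G x j.
Proof.
apply: (lt_rec_fixpoint (g := lower_zeta_coef_fuel)) => // f f' {}x ff' {}j.
have eq_sum i : scaled_below_sum f x i = scaled_below_sum f' x i.
  by congr (_ / _); apply: eq_bigr => y /ff' ->.
by rewrite /lower_zeta_coef_step eq_sum; under eq_bigr do rewrite eq_sum.
Qed.

Lemma lower_zeta_coef_gt x j : (rk x < j)%N -> G x j = 0.
Proof.
by move=> lt_xj; rewrite lower_zeta_coefE /lower_zeta_coef_step ltnNge ltnW // gtn_eqF.
Qed.

Lemma lower_zeta_coef_rec x j :
  qvar ^+ j * G x j = \sum_(y | (y <= x)%O) qvar ^+ rk y * G y j.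
Proof.
rewrite (bigD1 x) //= (eq_bigl (fun y => (y < x)%O)) => [|y]; last first.
  by rewrite lt_neqAle andbC.
case: (ltngtP j (rk x)) => [lt_jx | lt_xj | ->].
- have -> : \sum_(y | (y < x)%O) qvar ^+ rk y * G y j
            = qvar ^+ j * \sum_(y | (y < x)%O) qvar ^+ (rk y - j) * G y j.
    rewrite mulr_sumr; apply: eq_bigr => y _; case: (leqP j (rk y)) => [le_jy | lt_yj].
      by rewrite mulrA -exprD subnKC.
    by rewrite lower_zeta_coef_gt // !mulr0.
  have -> : qvar ^+ rk x = qvar ^+ j * qvar ^+ (rk x - j) by rewrite -exprD subnKC // ltnW.
  have : 1 - qvar ^+ (rk x - j) != 0 by rewrite subr_eq0 eq_sym qvarX_eq1 subn_eq0 -ltnNge.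
  rewrite lower_zeta_coefE /lower_zeta_coef_step lt_jx /scaled_below_sum.
  by move=> nz; rewrite -mulrA -mulrDr; congr (_ * _); apply: div_subr1_fixpoint.
- rewrite !lower_zeta_coef_gt ?mulr0 ?add0r ?big1 // => y lt_yx.
  by rewrite lower_zeta_coef_gt ?mulr0 // (ltn_trans (rk_lt lt_yx)).
- by rewrite big1 ?addr0 // => y /rk_lt lt_yx; rewrite lower_zeta_coef_gt ?mulr0.
Qed.

Lemma sum_lower_zeta_coef x n : (rk x < n)%N ->
  \sum_(j < n) G x j = (x == \bot%O)%:R.
Proof.
move=> lt_xn; rewrite -(subnKC lt_xn) big_split_ord /= [X in _ + X]big1 => [|j _]; last first.
  by rewrite lower_zeta_coef_gt // ltnS leq_addr.
rewrite addr0 big_ord_recr /= [G x (rk x)]lower_zeta_coefE /lower_zeta_coef_step ltnn eqxx.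
rewrite (eq_bigr (fun i : 'I_(rk x) => scaled_below_sum G x i)) => [|i _].
  by rewrite addrC subrK.
by rewrite lower_zeta_coefE /lower_zeta_coef_step ltn_ord.
Qed.

Lemma value_at_q0_lower_zeta_coef x j : value_at_q0 (G x j) (V x)`_j.
Proof.
elim/lt_ind: x j => x IHx j.
have value_below i : (i < rk x)%N -> value_at_q0 (scaled_below_sum G x i) (V x)`_i.
  move=> lt_ix; rewrite -(coef_mobius_rank_poly_below lt_ix) -[X in value_at_q0 _ X]mulr1.
  apply: value_at_q0M; last by apply: value_at_q0_inv_1subqX; rewrite subn_gt0.
  apply: value_at_q0_sum => y lt_yx.
  exact: value_at_q0M (value_at_q0_qvarX _) (IHx _ lt_yx _).
rewrite lower_zeta_coefE /lower_zeta_coef_step; case: ltngtP => [lt_jx | lt_xj | ->].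
- exact: value_below.
- by rewrite coef_mobius_rank_poly_gt //; apply: (value_at_q0_nat 0).
- have := sum_coef_mobius_rank_poly x; rewrite big_ord_recr /= => /(canRL (addKr _)).
  rewrite addrC => ->; apply: value_at_q0D (value_at_q0_nat _) (value_at_q0N _).
  by apply: value_at_q0_sum => i _; apply: value_below.
Qed.

Definition lower_zeta (x : P) (t : Qq) : Qq := \sum_(j < (rk \top%O).+1) G x j * t ^+ j.

Lemma lower_zeta_qmul x t :
  lower_zeta x (qvar * t) = \sum_(y | (y <= x)%O) qvar ^+ rk y * lower_zeta y t.
Proof.
transitivity (\sum_(j < (rk \top%O).+1) \sum_(y | (y <= x)%O) qvar ^+ rk y * G y j * t ^+ j).
  apply: eq_bigr => j _.
  by rewrite exprMn mulrA [G x j * _]mulrC lower_zeta_coef_rec mulr_suml.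
rewrite exchange_big; apply: eq_bigr => y _; rewrite mulr_sumr.
by apply: eq_bigr => j _; rewrite mulrA.
Qed.

Lemma lower_zeta1 x : lower_zeta x 1 = (x == \bot%O)%:R.
Proof.
rewrite /lower_zeta; under eq_bigr do rewrite expr1n mulr1.
by apply: sum_lower_zeta_coef; rewrite ltnS rk_le_top.
Qed.

Lemma lower_zeta_q x : lower_zeta x qvar = 1.
Proof.
rewrite -[qvar]mulr1 lower_zeta_qmul (bigD1 \bot%O) ?le0x //= big1 => [|y /andP[_ /negbTE]].
  by rewrite lower_zeta1 eqxx rk_bot mul1r addr0.
by rewrite lower_zeta1 => ->; rewrite mulr0.
Qed.

Definition multichain_sum (x : P) (m : nat) : Qq :=
  \sum_(e : {ffun 'I_m -> P} | multichain e && [forall i, (e i <= x)%O])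
    qvar ^+ (\sum_(i < m) rk (e i)).

Lemma multichain_sum0 x : multichain_sum x 0 = 1.
Proof.
rewrite /multichain_sum (eq_bigl xpredT) => [|e]; last first.
  by apply/andP; split; apply/forallP => -[].
under eq_bigr do rewrite big_ord0 expr0.
by rewrite sumr_const card_ffun card_ord expn0.
Qed.

Lemma multichain_sumS x m :
  multichain_sum x m.+1 = \sum_(y | (y <= x)%O) qvar ^+ rk y * multichain_sum y m.
Proof.
rewrite /multichain_sum (reindex _ (onW_bij _ (@ffun_rcons_bij P m))) /=.
under [RHS]eq_bigr do rewrite mulr_sumr.
rewrite pair_big_dep; apply: eq_big => [[y e] | [y e] _] /=.
  rewrite multichain_rcons (forall_ffun_rcons e y (fun v => v <= x)%O).
  apply/and3P/and3P => [[/andP[mc le_ey] _ le_yx] | [le_yx mc /forallP le_ey]].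
    by split.
  split=> //; first by apply/andP; split=> //; apply/forallP.
  by apply/forallP => i; apply: le_trans (le_ey i) le_yx.
rewrite big_ord_recr /= ffun_rcons_max exprD mulrC; congr (_ * _ ^+ _).
apply: eq_bigr => i _; rewrite -(ffun_rcons_lift e y); congr (rk (ffun_rcons e y _)).
exact/val_inj/esym/lift_max.
Qed.

Lemma lower_zeta_qX x m : lower_zeta x (qvar ^+ m.+1) = multichain_sum x m.
Proof.
elim: m x => [|m IHm] x; first by rewrite expr1 lower_zeta_q multichain_sum0.
by rewrite exprS lower_zeta_qmul multichain_sumS; apply: eq_bigr => y _; rewrite IHm.
Qed.

Definition qzeta_poly : {poly Qq} :=
  \sum_(j < (rk \top%O).+1) G \top%O j *: (1 + (qvar - 1) *: 'X) ^+ j.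

Lemma horner_qzeta_poly t : qzeta_poly.[t] = lower_zeta \top%O (1 + (qvar - 1) * t).
Proof. by rewrite horner_sum; apply: eq_bigr => j _; rewrite !hornerE. Qed.

Lemma qzeta_poly_is_qZeta : is_qZeta rk qzeta_poly.
Proof.
move=> n n_ge2; rewrite horner_qzeta_poly qintK.
have -> : qvar ^+ n = qvar ^+ n.-1.+1 by rewrite prednK // ltnW.
rewrite lower_zeta_qX; apply: eq_bigl => e.
by rewrite -[RHS]andbT; congr (_ && _); apply/forallP => i; apply: lex1.
Qed.

Definition qzeta_poly_at_q0 : {poly rat} :=
  \sum_(j < (rk \top%O).+1) (V \top%O)`_j *: (1 - 'X) ^+ j.

Lemma poly_value_at_q0_qzeta_poly : poly_value_at_q0 qzeta_poly qzeta_poly_at_q0.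
Proof.
apply: poly_value_at_q0_sum => j; apply: poly_value_at_q0Z.
  exact: value_at_q0_lower_zeta_coef.
rewrite -[- 'X]scaleN1r; apply/poly_value_at_q0X/poly_value_at_q0D.
  exact: poly_value_at_q0_1.
apply: poly_value_at_q0Z poly_value_at_q0_X.
by have := value_at_q0D value_at_q0_qvar (value_at_q0N (value_at_q0_nat 1)); rewrite add0r.
Qed.

Lemma horner_qzeta_poly_at_q0 y : qzeta_poly_at_q0.[1 - y] = (V \top%O).[y].
Proof.
rewrite (horner_coef_wide _ (size_mobius_rank_poly _)) horner_sum.
by apply: eq_bigr => j _; rewrite !hornerE opprB addrC subrK.
Qed.

End GradedPoset.

Unset Implicit Arguments.

Theorem mainTheorem1 (d : Order.disp_t) (P : finTBPOrderType d)
  (rk : P -> nat) (hrk : is_rank_function rk) :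
  (exists Z : {poly Qq}, is_qZeta rk Z) /\
  forall Z : {poly Qq}, is_qZeta rk Z ->
    (forall i : nat, no_pole_at_q0 Z`_i) /\
    exists Z0 : {poly rat},
      (forall i : nat, value_at_q0 Z`_i Z0`_i) /\
      (forall y : rat, y != 0 ->
         Z0.[1 - y] = y ^+ (rk (\top)%O) * (charpoly_poset rk).[y^-1]).
Proof.
have Zq := qzeta_poly_is_qZeta hrk.
split; first by exists (qzeta_poly rk).
move=> Z /(is_qZeta_unique Zq) <-.
have Zv := poly_value_at_q0_qzeta_poly hrk.
split=> [i | ]; first by exists (qzeta_poly_at_q0 rk)`_i.
exists (qzeta_poly_at_q0 rk); split=> // y y_neq0.
by rewrite (horner_qzeta_poly_at_q0 hrk) (mobius_rank_poly_top hrk y_neq0).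
Qed.
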